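(* Let $P,Q$ be nonzero coprime integers with $\Delta:=P^2-4Q\neq0$, such that $\alpha/\beta$ is not a root of unity, where $\alpha,\beta$ are the roots of $x^2-Px+Q$. Let $(U_n)$ be the Lucas sequence $U_n=(\alpha^n-\beta^n)/(\alpha-\beta)$. Then for all positive integers $n,k$ with $n\ge k$, \[\mathrm{lcm}(U_n,U_{n-1},\dots,U_{n-k+1})=\mathrm{lcm}\left\{U_m\binom{n}{m}_{\boldsymbol U}:\ 1\le m\le k\right\}.\]
   Context: $U_0=0$, $U_1=1$, $U_{n+2}=PU_{n+1}-QU_n$. For $j\ge0$, $[j]_{\boldsymbol U}!:=U_1\cdots U_j$ ($[0]_{\boldsymbol U}!=1$), and for $n\ge k\ge 1$, $\binom{n}{k}_{\boldsymbol U}:=\frac{U_nU_{n-1}\cdots U_{n-k+1}}{U_1U_2\cdots U_k}=\frac{[n]_{\boldsymbol U}!}{[k]_{\boldsymbol U}![n-k]_{\boldsymbol U}!}$ (these are integers when $\gcd(P,Q)=1$). *)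

From mathcomp Require Import all_boot all_order all_algebra all_field.
Set Implicit Arguments. Unset Strict Implicit. Unset Printing Implicit Defensive.
Import Order.TTheory GRing.Theory Num.Theory.
Local Open Scope ring_scope.

Fixpoint lucasU (P Q : int) (n : nat) : int :=
  match n with
  | 0%N => 0
  | 1%N => 1
  | (m.+1 as n').+1 => P * lucasU P Q n' - Q * lucasU P Q m
  end.

Definition lucas_fact (P Q : int) (j : nat) : int :=
  \prod_(1 <= i < j.+1) lucasU P Q i.

(* Lucasnomial binom(n,k)_U = U_n U_{n-1} ... U_{n-k+1} / (U_1 ... U_k),
   an integer when gcd(P,Q)=1; the quotient is exact integer division. *)
Definition lucas_binom (P Q : int) (n k : nat) : int :=
  ((\prod_(0 <= i < k) lucasU P Q (n - i)) %/ lucas_fact P Q k)%Z.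

Definition lcm_list (s : seq int) : int := foldr lcmz 1 s.

From mathcomp Require Import all_boot all_order all_algebra all_field.
From mathcomp Require Import ring zify.
From Stdlib Require Import Classical.
Set Implicit Arguments. Unset Strict Implicit. Unset Printing Implicit Defensive.
Import Order.TTheory GRing.Theory Num.Theory.

(** The sequence [|U_n|] is a strong divisibility sequence,
    gcd(|U_a|, |U_b|) = |U_(gcd a b)|, with no zero term beyond U_0 (Binet's
    formula and the root-of-unity hypothesis).  For such a sequence u, every d
    has a rank r: d divides u_x iff r divides x.  Hence, for a prime p,
    v_p(u_x) is the number of levels t with r(p^(t+1)) | x, and the valuations
    of u_n ... u_(n-m+1) and u_1 ... u_m count, level by level, the multiples
    of r(p^(t+1)) in the windows (n-m, n] and [1, m].  The first window holds
    as many as the second or one more, exactly as many when r(p^(t+1)) | m,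
    and one more only at levels t < v_p(u_(n-i)) for some i < m.  This gives
    v_p(u_m binom(n, m)_u) <= max_(i<m) v_p(u_(n-i)); together with
    u_(m+1) binom(n, m+1)_u = u_(n-m) binom(n, m)_u, the two lcm's divide each
    other. *)

Local Open Scope ring_scope.

Section LucasSequence.
Variables P Q : int.
Local Notation U := (lucasU P Q).

Lemma lucasU_SS n : U n.+2 = P * U n.+1 - Q * U n.
Proof. by []. Qed.

Lemma lucasU_add m n : U (m + n).+1 = U m.+1 * U n.+1 - Q * U m * U n.
Proof.
elim: m n => [|m IH] n; first by rewrite add0n mul1r mulr0 mul0r subr0.
by rewrite addSnnS IH !lucasU_SS; ring.
Qed.

Hypothesis coPQ : coprimez P Q.

Lemma coprimez_lucasU_Q n : (0 < n)%N -> coprimez (U n) Q.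
Proof.
elim: n => // -[_ _|n IH _]; first by rewrite /coprimez gcd1z.
rewrite lucasU_SS /coprimez gcdzC.
have -> : P * U n.+1 - Q * U n = - U n * Q + P * U n.+1 by ring.
rewrite gcdzMDl Gauss_gcdzr; last by rewrite /coprimez gcdzC.
by rewrite gcdzC; apply: IH.
Qed.

Lemma coprimez_lucasU_S n : coprimez (U n.+1) (U n).
Proof.
elim: n => [|n IH]; first by rewrite /coprimez gcd1z.
rewrite lucasU_SS /coprimez gcdzC.
have -> : P * U n.+1 - Q * U n = P * U n.+1 + - Q * U n by ring.
by rewrite gcdzMDl Gauss_gcdzr // coprimezN coprimez_lucasU_Q.
Qed.

Lemma gcdn_lucasU_addl m n : (0 < n)%N ->
  gcdn `|U (m + n)| `|U n| = gcdn `|U m| `|U n|.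
Proof.
case: n => // n _.
suff: gcdz (U (m + n.+1)) (U n.+1) = gcdz (U m) (U n.+1) by case.
rewrite addnS lucasU_add gcdzC.
have -> : U m.+1 * U n.+1 - Q * U m * U n = U m.+1 * U n.+1 + - Q * U n * U m.
  by ring.
rewrite gcdzMDl Gauss_gcdzr; first by rewrite gcdzC.
by rewrite coprimezMr coprimezN coprimez_lucasU_S andbT coprimez_lucasU_Q.
Qed.

Lemma gcdn_lucasU a b : gcdn `|U a| `|U b| = `|U (gcdn a b)|%N.
Proof.
move: {2}(a + b)%N (leqnn (a + b)) => s; elim: s a b => [|s IH] a b ab_le.
  by have [-> ->] : a = 0%N /\ b = 0%N by lia.
wlog le_ba : a b ab_le / (b <= a)%N.
  move=> W; case: (leqP b a) => [|/ltnW] le; first exact: W.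
  by rewrite gcdnC [gcdn a b]gcdnC; apply: W; lia.
case: b le_ba ab_le => [|b] le_ba ab_le; first by rewrite !gcdn0.
rewrite -(subnK le_ba) gcdn_lucasU_addl // IH; last by lia.
by rewrite gcdnC [in RHS]gcdnC gcdnDr.
Qed.

End LucasSequence.

Lemma lucasU_binet (P Q : int) (a b : algC) : a + b = P%:~R -> a * b = Q%:~R ->
  forall n, (lucasU P Q n)%:~R * (a - b) = a ^+ n - b ^+ n.
Proof.
move=> sum_ab prod_ab n.
suff: (lucasU P Q n)%:~R * (a - b) = a ^+ n - b ^+ n /\
      (lucasU P Q n.+1)%:~R * (a - b) = a ^+ n.+1 - b ^+ n.+1 by case.
elim: n => [|n [IH1 IH2]]; first by rewrite /= mul0r mul1r !expr0 !expr1 subrr.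
split=> //; rewrite lucasU_SS intrB !intrM -sum_ab -prod_ab mulrBl -!mulrA.
by rewrite IH1 IH2 !exprS; ring.
Qed.

Lemma lucasU_neq0 (P Q : int) : Q != 0 ->
  (forall alpha beta : algC,
     alpha + beta = P%:~R -> alpha * beta = Q%:~R ->
     forall r : nat, (0 < r)%N -> (alpha / beta) ^+ r != 1) ->
  forall n, (0 < n)%N -> lucasU P Q n != 0.
Proof.
move=> Q_neq0 not_root n n_gt0.
pose s : algC := sqrtC (P ^+ 2 - 4 * Q)%:~R.
have s2 : s ^+ 2 = P%:~R ^+ 2 - 4 * Q%:~R by rewrite sqrtCK intrB intrM rmorphXn.
pose a := (P%:~R + s) / 2; pose b := (P%:~R - s) / 2.
have sum_ab : a + b = P%:~R by rewrite /a /b; field.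
have prod_ab : a * b = Q%:~R.
  have -> : a * b = (P%:~R ^+ 2 - s ^+ 2) / 4 by rewrite /a /b; field.
  by rewrite s2; field.
have b_neq0 : b != 0.
  apply: contraNneq Q_neq0 => b0.
  by move: prod_ab; rewrite b0 mulr0 => /esym/eqP; rewrite intr_eq0.
apply: contra (not_root a b sum_ab prod_ab n n_gt0) => /eqP Un0.
have := lucasU_binet sum_ab prod_ab n; rewrite Un0 mul0r => /esym/eqP.
rewrite subr_eq0 => /eqP an_bn.
by rewrite expr_div_n an_bn divff // expf_neq0.
Qed.

Local Close Scope ring_scope.

Lemma sum_ltn N L : \sum_(t < N) (t < L) = minn N L.
Proof.
elim: N => [|N IH]; first by rewrite big_ord0 min0n.
by rewrite big_ord_recr /= IH; lia.
Qed.

Lemma count_dvdn_succ r a : \sum_(i < a) (r %| i.+1) = a %/ r.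
Proof.
have [->|r_gt0] := posnP r.
  by rewrite divn0 big1 // => i _; rewrite dvd0n.
elim: a => [|a IH]; first by rewrite big_ord0 div0n.
by rewrite big_ord_recr /= IH divnS // addnC.
Qed.

Lemma count_dvdn_window r n m : 0 < r -> m <= n ->
  \sum_(i < m) (r %| n - i) = n %/ r - (n - m) %/ r.
Proof.
move=> r_gt0; elim: m => [|m IH] le_mn; first by rewrite big_ord0 subn0 subnn.
rewrite big_ord_recr /= IH; last exact: ltnW.
have : (n - m) %/ r <= n %/ r by rewrite leq_div2r // leq_subr.
have -> : n - m = (n - m.+1).+1 by lia.
rewrite divnS //.
by move: (n %/ r) ((n - m.+1) %/ r) (r %| _) => a b [] /=; lia.
Qed.

Lemma count_dvdn_window_succ r n m : 0 < r -> m <= n ->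
  \sum_(i < m) (r %| n - i) = \sum_(i < m) (r %| i.+1) + (r <= (n - m) %% r + m %% r).
Proof.
move=> r_gt0 le_mn; rewrite count_dvdn_window // count_dvdn_succ.
by rewrite -{1}(subnK le_mn) divnD // -addnA addKn.
Qed.

Lemma count_dvdn_window_ge r n m : m <= n ->
  \sum_(i < m) (r %| i.+1) <= \sum_(i < m) (r %| n - i).
Proof.
have [->|r_gt0 le_mn] := posnP r.
  by rewrite big1 // => i _; rewrite dvd0n.
by rewrite count_dvdn_window_succ ?leq_addr.
Qed.

Lemma count_dvdn_window_le r n m : 0 < m <= n ->
  (r %| m) + \sum_(i < m) (r %| n - i)
    <= (0 < \sum_(i < m) (r %| n - i)) + \sum_(i < m) (r %| i.+1).
Proof.
case/andP=> m_gt0 le_mn; have [->|r_gt0] := posnP r.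
  rewrite dvd0n gtn_eqF // big1 // => i _.
  by rewrite dvd0n subn_eq0 leqNgt (leq_trans (ltn_ord i) le_mn).
rewrite count_dvdn_window_succ // count_dvdn_succ.
have [r_m|_] := boolP (r %| m).
  have /eqP m_mod_r := r_m.
  rewrite m_mod_r addn0 (leqNgt r) ltn_pmod //= addn0 leq_add2r.
  by rewrite divn_gt0 // (dvdn_leq m_gt0 r_m).
by case: (r <= _); rewrite /= ?addn0 ?addn1 ?leq_addl.
Qed.

Lemma logn_count p N x : prime p -> 0 < x -> logn p x <= N ->
  logn p x = \sum_(t < N) (p ^ t.+1 %| x).
Proof.
move=> p_pr x_gt0 le_logN.
rewrite (eq_bigr (fun t : 'I_N => (t < logn p x) : nat)); last first.
  by move=> t _; rewrite pfactor_dvdn.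
by rewrite sum_ltn; apply/esym/minn_idPr.
Qed.

Lemma logn_prod p m (F : nat -> nat) : (forall i, i < m -> 0 < F i) ->
  logn p (\prod_(i < m) F i) = \sum_(i < m) logn p (F i).
Proof.
elim: m => [|m IH] F_gt0; first by rewrite !big_ord0 logn1.
have lt_F_gt0 i : i < m -> 0 < F i by move/leqW; apply: F_gt0.
rewrite !big_ord_recr /= lognM ?IH ?F_gt0 //.
by apply: prodn_gt0 => i; apply: lt_F_gt0.
Qed.

Lemma logn_prod_count p N m (F : nat -> nat) : prime p ->
  (forall i, i < m -> 0 < F i) -> (forall i, i < m -> logn p (F i) <= N) ->
  logn p (\prod_(i < m) F i) = \sum_(t < N) \sum_(i < m) (p ^ t.+1 %| F i).
Proof.
move=> p_pr F_gt0 le_logN; rewrite logn_prod // exchange_big.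
by apply: eq_bigr => i _; rewrite -logn_count ?F_gt0 ?le_logN.
Qed.

Lemma dvdn_logn d m : 0 < d -> 0 < m ->
  (forall p, prime p -> logn p d <= logn p m) -> d %| m.
Proof.
move=> d_gt0 m_gt0 le_logn; apply/(dvdn_partP _ d_gt0) => p.
by rewrite mem_primes p_part => /andP[p_pr _]; rewrite pfactor_dvdn ?le_logn.
Qed.

Lemma leq_bigmax_nat (F : nat -> nat) n x : x <= n -> F x <= \max_(y < n.+1) F y.
Proof. by move=> le_xn; apply: (@leq_bigmax _ (fun y : 'I_n.+1 => F y) (Ordinal _)). Qed.

Lemma biglcmn_gt0 (I : finType) (F : I -> nat) :
  (forall i, 0 < F i) -> 0 < \big[lcmn/1]_i F i.
Proof. by move=> F_gt0; elim/big_ind: _ => // a b; rewrite lcmn_gt0 => ->. Qed.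

Section StrongDivisibilitySequence.
Variable u : nat -> nat.
Hypothesis u0 : u 0 = 0.
Hypothesis u_gt0 : forall x, 0 < x -> 0 < u x.
Hypothesis gcdn_u : forall a b, gcdn (u a) (u b) = u (gcdn a b).

Lemma dvdn_u a b : a %| b -> u a %| u b.
Proof. by move=> dvd_ab; apply/gcdn_idPl; rewrite gcdn_u (gcdn_idPl dvd_ab). Qed.

(* The [x] with [d %| u x] are closed under [gcdn] and under multiples, so
   they are the multiples of the least positive one. *)
Lemma rank_of_apparition d : exists r, forall x, (d %| u x) = (r %| x).
Proof.
have [[x0 /andP[x0_gt0 d_x0]]|none] := classic (exists x, (0 < x) && (d %| u x)).
  have ex : exists x, (0 < x) && (d %| u x) by exists x0; rewrite x0_gt0.
  case: (ex_minnP ex) => r /andP[r_gt0 d_r] r_min; exists r => x.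
  apply/idP/idP => [d_x|/dvdn_u]; last exact: dvdn_trans.
  have [->|x_gt0] := posnP x; first exact: dvdn0.
  have g_gt0 : 0 < gcdn r x by rewrite gcdn_gt0 r_gt0.
  have d_g : d %| u (gcdn r x) by rewrite -gcdn_u dvdn_gcd d_r.
  suff -> : r = gcdn r x by apply: dvdn_gcdr.
  apply/eqP; rewrite eqn_leq (dvdn_leq r_gt0 (dvdn_gcdl r x)) andbT.
  by apply: r_min; rewrite g_gt0.
exists 0 => x; rewrite dvd0n.
have [->|x_gt0] := posnP x; first by rewrite u0 dvdn0.
by apply/negbTE/negP => d_x; apply: none; exists x; rewrite x_gt0.
Qed.

Lemma count_dvdn_u_window_ge d n m : m <= n ->
  \sum_(i < m) (d %| u i.+1) <= \sum_(i < m) (d %| u (n - i)).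
Proof.
have [r rank_r] := rank_of_apparition d.
have sum_rank (F : nat -> nat) :
  \sum_(i < m) (d %| u (F i)) = \sum_(i < m) (r %| F i).
  by apply: eq_bigr => i _; rewrite rank_r.
rewrite !sum_rank; exact: count_dvdn_window_ge.
Qed.

Lemma count_dvdn_u_window_le d n m : 0 < m <= n ->
  (d %| u m) + \sum_(i < m) (d %| u (n - i))
    <= (0 < \sum_(i < m) (d %| u (n - i))) + \sum_(i < m) (d %| u i.+1).
Proof.
have [r rank_r] := rank_of_apparition d.
have sum_rank (F : nat -> nat) :
  \sum_(i < m) (d %| u (F i)) = \sum_(i < m) (r %| F i).
  by apply: eq_bigr => i _; rewrite rank_r.
rewrite rank_r !sum_rank; exact: count_dvdn_window_le.
Qed.

Definition ufall n m := \prod_(i < m) u (n - i).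
Definition ufact m := \prod_(i < m) u i.+1.
Definition ubinom n m := ufall n m %/ ufact m.

Lemma ufall_gt0 n m : m <= n -> 0 < ufall n m.
Proof.
by move=> le_mn; apply: prodn_gt0 => i; rewrite u_gt0 // subn_gt0 (leq_trans _ le_mn).
Qed.

Lemma ufact_gt0 m : 0 < ufact m.
Proof. by apply: prodn_gt0 => i; apply: u_gt0. Qed.

Lemma logn_ufact_count p N m : prime p ->
  (forall x, 0 < x <= m -> logn p (u x) <= N) ->
  logn p (ufact m) = \sum_(t < N) \sum_(i < m) (p ^ t.+1 %| u i.+1).
Proof.
move=> p_pr le_logN; apply: (logn_prod_count (F := fun i => u i.+1)) => // i lt_im.
  exact: u_gt0.
by apply: le_logN; rewrite ltn0Sn.
Qed.

Lemma logn_ufall_count p N n m : prime p -> m <= n ->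
  (forall x, 0 < x <= n -> logn p (u x) <= N) ->
  logn p (ufall n m) = \sum_(t < N) \sum_(i < m) (p ^ t.+1 %| u (n - i)).
Proof.
move=> p_pr le_mn le_logN.
apply: (logn_prod_count (F := fun i => u (n - i))) => // i lt_im.
  by apply: u_gt0; lia.
by apply: le_logN; lia.
Qed.

Lemma logn_ufact_le p n m : prime p -> m <= n ->
  logn p (ufact m) <= logn p (ufall n m).
Proof.
move=> p_pr le_mn; set N := \max_(y < n.+1) logn p (u y).
have le_logN x : 0 < x <= n -> logn p (u x) <= N.
  by case/andP=> _; apply: (leq_bigmax_nat (fun y => logn p (u y))).
rewrite (logn_ufall_count p_pr le_mn le_logN) (logn_ufact_count (N := N) p_pr).
  by apply: leq_sum => t _; apply: count_dvdn_u_window_ge.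
by move=> x le_xm; apply: le_logN; lia.
Qed.

Lemma logn_u_ufall_le p n m L : prime p -> 0 < m <= n ->
  (forall i, i < m -> logn p (u (n - i)) <= L) ->
  logn p (u m) + logn p (ufall n m) <= L + logn p (ufact m).
Proof.
move=> p_pr lt0mn le_logL; set N := \max_(y < n.+1) logn p (u y).
have le_logN x : 0 < x <= n -> logn p (u x) <= N.
  by case/andP=> _; apply: (leq_bigmax_nat (fun y => logn p (u y))).
have [m_gt0 le_mn] := andP lt0mn.
rewrite (logn_count p_pr (u_gt0 m_gt0) (le_logN m lt0mn)).
rewrite (logn_ufall_count p_pr le_mn le_logN) (logn_ufact_count (N := N) p_pr); last first.
  by move=> x le_xm; apply: le_logN; lia.
apply: leq_trans (leq_add (geq_minr N L) (leqnn _)).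
rewrite -sum_ltn -!big_split /=; apply: leq_sum => t _.
apply: leq_trans (count_dvdn_u_window_le _ lt0mn) _; rewrite leq_add2r.
(* Level [t] can contribute only if [p ^ t.+1] divides some [u (n - i)]. *)
have [lt_tL|le_Lt] := ltnP t L; first exact: leq_b1.
suff -> : \sum_(i < m) (p ^ t.+1 %| u (n - i)) = 0 by [].
apply: big1 => i _; apply/eqP; rewrite eqb0.
have ni_gt0 : 0 < n - i by have := ltn_ord i; lia.
rewrite pfactor_dvdn ?u_gt0 // -leqNgt.
exact: leq_trans (le_logL i (ltn_ord i)) le_Lt.
Qed.

Lemma ufact_dvdn_ufall n m : m <= n -> ufact m %| ufall n m.
Proof.
move=> le_mn; apply: dvdn_logn (ufact_gt0 m) (ufall_gt0 le_mn) _ => p p_pr.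
exact: logn_ufact_le.
Qed.

Lemma ubinomK n m : m <= n -> ubinom n m * ufact m = ufall n m.
Proof. by move=> le_mn; rewrite divnK // ufact_dvdn_ufall. Qed.

Lemma ubinom_gt0 n m : m <= n -> 0 < ubinom n m.
Proof.
move=> le_mn; have := ufall_gt0 le_mn.
by rewrite -(ubinomK le_mn) muln_gt0 => /andP[].
Qed.

Lemma u_ubinomS n m : m < n -> u m.+1 * ubinom n m.+1 = u (n - m) * ubinom n m.
Proof.
move=> lt_mn; apply/eqP; rewrite -(eqn_pmul2r (ufact_gt0 m)).
have := ubinomK lt_mn; rewrite /ufall /ufact !big_ord_recr /= -/(ufall n m) -/(ufact m).
rewrite -(ubinomK (ltnW lt_mn)) => eq_S.
have -> : u m.+1 * ubinom n m.+1 * ufact m = ubinom n m.+1 * (ufact m * u m.+1) by ring.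
by rewrite eq_S; apply/eqP; ring.
Qed.

Lemma logn_u_ubinom_le p n m L : prime p -> 0 < m <= n ->
  (forall i, i < m -> logn p (u (n - i)) <= L) -> logn p (u m * ubinom n m) <= L.
Proof.
move=> p_pr lt0mn le_logL; have /andP[m_gt0 le_mn] := lt0mn.
rewrite lognM ?u_gt0 ?ubinom_gt0 // logn_div ?ufact_dvdn_ufall //.
have := logn_u_ufall_le p_pr lt0mn le_logL.
have := logn_ufact_le p_pr le_mn.
lia.
Qed.

Lemma biglcmn_u_ubinom n k : k <= n ->
  \big[lcmn/1]_(i < k) u (n - i) = \big[lcmn/1]_(i < k) (u i.+1 * ubinom n i.+1).
Proof.
move=> le_kn; have lt_in (i : 'I_k) : i < n by apply: leq_trans (ltn_ord i) le_kn.
apply/eqP; rewrite eqn_dvd; apply/andP; split; apply/dvdn_biglcmP => i _.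
  by rewrite (biglcmn_sup i) // u_ubinomS ?dvdn_mulr.
set lcm := \big[lcmn/1]_(j < k) u (n - j).
have lcm_gt0 : 0 < lcm by apply: biglcmn_gt0 => j; rewrite u_gt0 ?subn_gt0.
apply: (dvdn_logn _ lcm_gt0) => [|p p_pr].
  by rewrite muln_gt0 u_gt0 ?ubinom_gt0.
have lt0in : 0 < i.+1 <= n by rewrite ltn0Sn lt_in.
apply: (logn_u_ubinom_le p_pr lt0in) => j lt_ji.
have lt_jk : j < k by apply: leq_trans lt_ji (ltn_ord i).
apply: (dvdn_leq_log _ lcm_gt0).
exact: (biglcmn_sup (Ordinal lt_jk)).
Qed.

End StrongDivisibilitySequence.

Local Open Scope ring_scope.

Lemma lcm_list_iota (f : nat -> int) a k :
  lcm_list [seq f x | x <- iota a k] = (\big[lcmn/1%N]_(i < k) `|f (a + i)%N|%N)%:Z.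
Proof.
have -> : iota a k = map (addn a) (iota 0 k) by rewrite -iotaDl addn0.
rewrite -map_comp -(big_mkord (fun _ => true) (fun i => `|f (a + i)|%N)) /index_iota subn0.
by elim: (iota 0 k) => [|x s IH]; rewrite ?big_nil ?big_cons //= IH.
Qed.

Lemma absz_divz (a b : int) : (b %| a)%Z -> `|(a %/ b)%Z|%N = (`|a| %/ `|b|)%N.
Proof.
have [-> _|b_neq0 /divzK a_eq] := eqVneq b 0; first by rewrite divz0 divn0.
by rewrite -{2}a_eq abszM mulnK // absz_gt0.
Qed.

Lemma absz_prod (I : finType) (F : I -> int) :
  `|(\prod_i F i)%R|%N = \prod_i `|F i|%N.
Proof. exact: (big_morph _ abszM). Qed.

Lemma absz_lucas_binom (P Q : int) n m : coprimez P Q ->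
  (forall x, (0 < x)%N -> lucasU P Q x != 0) -> (m <= n)%N ->
  `|lucas_binom P Q n m|%N = ubinom (fun x => `|lucasU P Q x|%N) n m.
Proof.
move=> coPQ U_neq0 le_mn.
have u_gt0 x : (0 < x)%N -> (0 < `|lucasU P Q x|)%N.
  by move=> x_gt0; rewrite absz_gt0 U_neq0.
rewrite /lucas_binom /lucas_fact big_add1 -pred_Sn !big_mkord absz_divz.
  by rewrite !absz_prod.
rewrite dvdzE !absz_prod.
exact: (ufact_dvdn_ufall (u := fun x => `|lucasU P Q x|%N) erefl u_gt0 (gcdn_lucasU coPQ)).
Qed.

Theorem theorem7 (P Q : int) :
  P != 0 -> Q != 0 -> coprimez P Q -> P ^+ 2 - 4 * Q != 0 ->
  (forall alpha beta : algC,
     alpha + beta = P%:~R -> alpha * beta = Q%:~R ->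
     forall r : nat, (0 < r)%N -> (alpha / beta) ^+ r != 1) ->
  forall n k : nat, (1 <= k)%N -> (k <= n)%N ->
    lcm_list [seq lucasU P Q (n - i) | i <- iota 0 k]
    = lcm_list [seq lucasU P Q m * lucas_binom P Q n m | m <- iota 1 k].
Proof.
(* P != 0 and the discriminant condition follow from the root-of-unity
   hypothesis, and the case k = 0 holds trivially. *)
move=> _ Q_neq0 coPQ _ not_root n k _ le_kn.
have U_neq0 := lucasU_neq0 Q_neq0 not_root.
pose u x := `|lucasU P Q x|%N.
have u_gt0 x : (0 < x)%N -> (0 < u x)%N by move=> x_gt0; rewrite absz_gt0 U_neq0.
rewrite !lcm_list_iota; congr Posz.
rewrite (eq_bigr (fun i : 'I_k => u (n - i)%N)) => [|i _]; last by rewrite add0n.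
rewrite (biglcmn_u_ubinom (u := u) erefl u_gt0 (gcdn_lucasU coPQ) le_kn).
apply: eq_bigr => i _; rewrite add1n abszM absz_lucas_binom //.
exact: leq_trans (ltn_ord i) le_kn.
Qed.
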